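(* Let $H\in\mathbb{R}^{\ell\times\ell}$ be symmetric, $0\ne g_0\in\mathbb{R}^\ell$, $\gamma>0$, and let $(\lambda_*,w_* )$ be a minimizer of pQEPmin. (1) If $g_0^{\top}w_*\ne0$ for all minimizers $(\lambda_*,w_* )$ of pQEPmin, then $\lambda_*<\lambda_{\min}(H)$ and the minimizer of pLGopt is unique. (2) If there exists a minimizer $(\lambda_*,w_* )$ of pQEPmin with $g_0^{\top}w_*=0$, then $\lambda_*=\lambda_{\min}(H)$, and the minimizer of pLGopt is unique if and only if $\|x_*\|=\gamma$, where $x_*=-(H-\lambda_*I)^{\dagger}g_0$.
   Context: pLGopt: minimize $\lambda$ over pairs $(\lambda,y)\in\mathbb{R}\times\mathbb{R}^\ell$ with $(H-\lambda I)y=-g_0$ and $\|y\|=\gamma$. pQEPmin: minimize $\lambda$ over pairs $(\lambda,w)$ with $\lambda\in\mathbb{R}$, $0\ne w\in\mathbb{R}^\ell$ and $(H-\lambda I)^2w=\gamma^{-2}g_0g_0^{\top}w$. $\lambda_{\min}(H)$ is the smallest eigenvalue of $H$; $X^\dagger$ is the Moore–Penrose inverse. *)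

From HB Require Import structures.
From mathcomp Require Import all_boot all_order all_algebra.
From mathcomp Require Import boolp classical_sets reals.
Set Implicit Arguments. Unset Strict Implicit. Unset Printing Implicit Defensive.
Import Order.TTheory GRing.Theory Num.Theory.
Local Open Scope ring_scope.

Section Defs.
Variables (R : realType) (n : nat).

Definition vnorm (y : 'cV[R]_n) : R := Num.sqrt ((y^T *m y) 0 0).

Definition is_lambda_min (H : 'M[R]_n) (a : R) : Prop :=
  eigenvalue H a /\ forall b, eigenvalue H b -> a <= b.
Definition lambda_min (H : 'M[R]_n) : R := xget 0 [set a | is_lambda_min H a].

Definition is_MP_inverse (A X : 'M[R]_n) : Prop :=
  [/\ A *m X *m A = A, X *m A *m X = X, (A *m X)^T = A *m X & (X *m A)^T = X *m A].
Definition MP_inverse (A : 'M[R]_n) : 'M[R]_n := xget 0 [set X | is_MP_inverse A X].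

Definition LG_feasible (H : 'M[R]_n) (g0 : 'cV[R]_n) (gam : R) (lam : R) (y : 'cV[R]_n) : Prop :=
  (H - lam%:M) *m y = - g0 /\ vnorm y = gam.
Definition LG_minimizer H g0 gam (p : R * 'cV[R]_n) : Prop :=
  LG_feasible H g0 gam p.1 p.2 /\
  forall lam y, LG_feasible H g0 gam lam y -> p.1 <= lam.

Definition QEP_feasible (H : 'M[R]_n) (g0 : 'cV[R]_n) (gam : R) (lam : R) (w : 'cV[R]_n) : Prop :=
  w != 0 /\ (H - lam%:M) *m (H - lam%:M) *m w = gam ^- 2 *: (g0 *m g0^T *m w).
Definition QEP_minimizer H g0 gam (lam : R) (w : 'cV[R]_n) : Prop :=
  QEP_feasible H g0 gam lam w /\
  forall lam' w', QEP_feasible H g0 gam lam' w' -> lam <= lam'.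
End Defs.

(* In an orthonormal eigenbasis of H (H = Q diag(d) Q^T, c = Q^T g0) both problems are
   governed by the secular function phi(lam) = sum_i c_i^2 / (d_i - lam)^2, which equals
   ||(H - lam I)^-1 g0||^2 off the spectrum.  A pLGopt pair (lam, y) gives the pQEPmin pair
   (lam, (H - lam I)^-1 y), or an eigenvector when lam is an eigenvalue; conversely a
   pQEPmin pair with g0^T w <> 0 gives the pLGopt pair (lam, -(gam^2 / g0^T w) (H - lam I) w).
   Hence lam_* bounds pLGopt from below.  If g0 has a component along the eigenspace of
   lambda_min, phi blows up at lambda_min, so phi = gam^2 has a root strictly to its left;
   this forces lam_* < lambda_min, where H - lam_* I is invertible and the solution is
   unique.  Otherwise lam_* = lambda_min, the solutions at lambda_min are x_* + z with z in
   the eigenspace, and ||x_*||^2 = phi(lambda_min): if ||x_*|| < gam then x_* +- t v are two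
   minimizers, and if ||x_*|| > gam then phi = gam^2 has a root left of lambda_min. *)

From HB Require Import structures.
From mathcomp Require Import all_boot all_order all_algebra.
From mathcomp Require Import boolp classical_sets reals.
From mathcomp Require Import spectral complex.
From mathcomp Require Import ring lra.
Import Order.TTheory GRing.Theory Num.Theory.
Set Implicit Arguments. Unset Strict Implicit. Unset Printing Implicit Defensive.
Local Open Scope ring_scope.

Local Notation dot u v := ((u^T *m v) 0 0).

Section Dot.
Variables (R : realDomainType) (n : nat).
Implicit Types u v w x : 'cV[R]_n.

Lemma dot_scalar u v : u^T *m v = (dot u v)%:M.
Proof. exact: mx11_scalar. Qed.

Lemma trmx_mulmx_eq0 u v : (u^T *m v == 0) = (dot u v == 0).
Proof. by apply/eqP/eqP => [->|uv]; rewrite ?mxE // dot_scalar uv raddf0. Qed.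

Lemma trmx_dot u v : (u^T *m v)^T = v^T *m u.
Proof. by rewrite trmx_mul trmxK. Qed.

Lemma dot_self_sum x : dot x x = \sum_i x i 0 ^+ 2.
Proof. by rewrite mxE; apply: eq_bigr => i _; rewrite mxE expr2. Qed.

Lemma dot_self_ge0 x : 0 <= dot x x.
Proof. by rewrite dot_self_sum sumr_ge0 // => i _; rewrite sqr_ge0. Qed.

Lemma dot_self_eq0 x : (dot x x == 0) = (x == 0).
Proof.
apply/idP/eqP => [|->]; last by rewrite mulmx0 mxE.
rewrite dot_self_sum psumr_eq0 => [/allP x0|i _]; last exact: sqr_ge0.
apply/matrixP => i j; rewrite ord1 mxE.
by apply/eqP; rewrite -sqrf_eq0; apply: implyP (x0 i (mem_index_enum i)) isT.
Qed.

Lemma dotBl u v w : dot (u - v) w = dot u w - dot v w.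
Proof.
by rewrite [(u - v)^T]linearB mulmxBl [(_ + _ : 'M_1) 0 0]mxE [(- _ : 'M_1) 0 0]mxE.
Qed.

Lemma dotBr u v w : dot u (v - w) = dot u v - dot u w.
Proof. by rewrite mulmxBr [(_ + _ : 'M_1) 0 0]mxE [(- _ : 'M_1) 0 0]mxE. Qed.

Lemma dotZl k u v : dot (k *: u) v = k * dot u v.
Proof. by rewrite [(k *: u)^T]linearZ -scalemxAl [(_ *: _ : 'M_1) 0 0]mxE. Qed.

Lemma dotZr k u v : dot u (k *: v) = k * dot u v.
Proof. by rewrite -scalemxAr [(_ *: _ : 'M_1) 0 0]mxE. Qed.

Lemma dot_self_add_orth u v : u^T *m v = 0 ->
  dot (u + v) (u + v) = dot u u + dot v v.
Proof.
move=> uv; have vu : v^T *m u = 0 by rewrite -trmx_dot uv trmx0.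
by rewrite [(u + v)^T]linearD mulmxDl !mulmxDr uv vu addr0 add0r mxE.
Qed.
End Dot.

Section Householder.
Variables (R : realFieldType) (n : nat).

Lemma householder_reflection (x : 'cV[R]_n.+1) : dot x x = 1 ->
  exists P : 'M_n.+1, [/\ P^T = P, P *m P = 1%:M & P *m delta_mx 0 0 = x].
Proof.
move=> x1; pose e : 'cV[R]_n.+1 := delta_mx 0 0.
have [<-|e_neq_x] := eqVneq e x; first by exists 1%:M; split; rewrite ?trmx1 ?mul1mx.
pose u := e - x; pose t := dot u u; pose c := 2 / t.
have dot_ex : dot e x = x 0 0 by rewrite trmx_delta -rowE mxE.
have dot_ee : dot e e = 1 by rewrite trmx_delta mul_delta_mx mxE !eqxx.
have dot_xe : dot x e = x 0 0 by rewrite -colE !mxE.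
have tE : t = 2 * (1 - x 0 0).
  by rewrite /t /u !dotBl !dotBr dot_ex dot_xe dot_ee x1; ring.
have t0 : t != 0 by rewrite /t dot_self_eq0 subr_eq0.
exists (1%:M - c *: (u *m u^T)); split.
- by rewrite linearB /= trmx1 linearZ /= trmx_mul trmxK.
- rewrite mulmxBl !mulmxBr !mul1mx mulmx1 -!scalemxAl -!scalemxAr mulmxA.
  rewrite -(mulmxA u) dot_scalar mul_mx_scalar -scalemxAl !scalerA.
  have -> : c * (c * t) = c + c by rewrite /c; field.
  by rewrite scalerDl opprB addrK subrK.
- rewrite mulmxBl mul1mx -scalemxAl -mulmxA dot_scalar mul_mx_scalar scalerA.
  have -> : dot u e = 1 - x 0 0 by rewrite /u dotBl dot_xe dot_ee.
  have -> : c * (1 - x 0 0) = 1.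
    by rewrite /c tE; field; move: t0; rewrite tE mulf_eq0 negb_or => /andP[].
  by rewrite scale1r /u opprB addrC subrK.
Qed.
End Householder.

Lemma trmx_subscalar (R : pzRingType) n (A : 'M[R]_n) a :
  A^T = A -> (A - a%:M)^T = A - a%:M.
Proof. by move=> AT; rewrite linearB /= AT tr_scalar_mx. Qed.

Lemma mulmx_subscalar_eq0 (R : pzRingType) n (A : 'M[R]_n) a (z : 'cV[R]_n) :
  ((A - a%:M) *m z == 0) = (A *m z == a *: z).
Proof. by rewrite mulmxBl mul_scalar_mx subr_eq0. Qed.

Section SymmetricEigenvector.
Variables (F : fieldType) (n : nat) (S : 'M[F]_n).
Hypothesis ST : S^T = S.

Lemma sym_eigenvalueP a :
  reflect (exists2 z : 'cV_n, z != 0 & S *m z = a *: z) (eigenvalue S a).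
Proof.
apply: (iffP eigenvalueP) => [[v vS v0] | [z z0 Sz]].
  by exists v^T; rewrite ?trmx_eq0 // -{1}ST -trmx_mul vS linearZ.
by exists z^T; rewrite ?trmx_eq0 // -{1}ST -trmx_mul Sz linearZ.
Qed.
End SymmetricEigenvector.

Section RealSpectral.
Variable R : rcfType.

Lemma sym_eigenvalue_exists n (S : 'M[R]_n.+1) : S^T = S -> exists a, eigenvalue S a.
Proof.
(* Over [R[i]], [S] is hermitian, so its spectral decomposition has a real diagonal. *)
move=> ST; pose SC := map_mx (real_complex R) S.
have SCherm : SC \is hermsymmx.
  apply: realsym_hermsym; last by apply/mxOverP => i j; rewrite mxE complex_real.
  apply/is_hermitianmxP; rewrite expr0 scale1r.
  by apply/matrixP => i j; rewrite !mxE -[in LHS]ST mxE.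
have /orthomx_spectralP SCE := hermitian_normalmx SCherm.
set P := spectralmx SC in SCE; set D := spectral_diag SC in SCE.
have Punit : P \in unitmx := spectral_unit SC.
have SCeig : eigenvalue SC (D 0 0).
  apply/eigenvalueP; exists (delta_mx 0 0 *m P); last first.
    rewrite mulmx_free_eq0 ?row_free_unit //.
    by apply/eqP => /matrixP/(_ 0 0)/eqP; rewrite !mxE oner_eq0.
  by rewrite {1}SCE !mulmxA mulmxK // -[_ *m diag_mx D]rowE row_diag_mx scalemxAl.
have /RRe_real DE : D 0 0 \is Num.real by move/mxOverP: (hermitian_spectral_diag_real SCherm).
exists (complex.Re (D 0 0)).
by move: SCeig; rewrite -DE !eigenvalue_root_char -map_char_poly fmorph_root.
Qed.

Lemma sym_unit_eigenvector n (S : 'M[R]_n.+1) : S^T = S ->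
  exists a (x : 'cV_n.+1), dot x x = 1 /\ S *m x = a *: x.
Proof.
move=> ST; have [a /(sym_eigenvalueP ST) [z z0 Sz]] := sym_eigenvalue_exists ST.
have zz : 0 < dot z z by rewrite lt_def dot_self_eq0 z0 dot_self_ge0.
exists a, ((Num.sqrt (dot z z))^-1 *: z); split.
  rewrite dotZl dotZr mulrA -invfM -expr2 sqr_sqrtr ?ltW //.
  by rewrite mulVf ?gt_eqF.
by rewrite -scalemxAr Sz !scalerA mulrC.
Qed.

Lemma sym_block_of_eigen n (S : 'M[R]_(1 + n)) a :
  S^T = S -> S *m delta_mx 0 0 = a *: (delta_mx 0 0 : 'cV_(1 + n)) ->
  S = block_mx a%:M 0 0 (drsubmx S).
Proof.
move=> ST Se; have col0 i : S i 0 = a * (i == 0)%:R.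
  by move/matrixP: Se => /(_ i 0); rewrite -colE !mxE andbT.
have lshift0 : lshift n (0 : 'I_1) = 0 by apply: val_inj.
have dl0 : dlsubmx S = 0.
  by apply/matrixP => i j; rewrite ord1 !mxE lshift0 col0 mulr0.
have ur0 : ursubmx S = 0 by rewrite -ST -trmx_dlsub dl0 trmx0.
rewrite -[S in LHS]submxK dl0 ur0; congr block_mx.
by apply/matrixP => i j; rewrite !ord1 !mxE lshift0 col0 eqxx mulr1 mulr1n.
Qed.

Theorem sym_orthogonal_diag n (S : 'M[R]_n) : S^T = S ->
  exists (Q : 'M_n) (d : 'rV_n), Q^T *m Q = 1%:M /\ S = Q *m diag_mx d *m Q^T.
Proof.
elim: n S => [|n IH] S ST.
  by exists 1%:M, 0; split; [rewrite trmx1 mul1mx | rewrite [S]flatmx0 [RHS]flatmx0].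
have [a [x [x1 Sx]]] := sym_unit_eigenvector ST.
(* The reflection [P] exchanges [e_0] and [x], so [P S P] splits as [a] (+) [S2]. *)
have [P [PT PP Pe]] := householder_reflection x1.
pose S1 := P *m S *m P.
have S1T : S1^T = S1 by rewrite !trmx_mul PT ST mulmxA.
have S1e : S1 *m delta_mx 0 0 = a *: (delta_mx 0 0 : 'cV_n.+1).
  by rewrite /S1 -mulmxA Pe -mulmxA Sx -scalemxAr -Pe mulmxA PP mul1mx.
pose S2 := @drsubmx _ 1 n 1 n S1.
have S2T : S2^T = S2 by rewrite trmx_drsub S1T.
have [Q2 [d2 [Q2Q S2E]]] := IH _ S2T.
pose B : 'M_(1 + n) := block_mx 1%:M 0 0 Q2.
exists (P *m B), (row_mx a%:M d2); split.
  rewrite trmx_mul mulmxA -(mulmxA B^T) PT PP mulmx1 tr_block_mx trmx1 !trmx0.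
  rewrite /B (@mulmx_block _ 1 n 1 n 1 n) !mulmx0 !mul0mx !mulmx1 !addr0 !add0r Q2Q.
  by rewrite -scalar_mx_block.
have -> : S = P *m S1 *m P by rewrite /S1 !mulmxA PP mul1mx -mulmxA PP mulmx1.
rewrite [S1 in LHS](sym_block_of_eigen S1T S1e) -/S2 S2E trmx_mul PT !mulmxA.
congr (_ *m P); rewrite -!mulmxA; congr (P *m _).
rewrite /B (@diag_mx_row _ n 1) (@tr_block_mx _ 1 n 1 n) trmx1 !trmx0.
rewrite !(@mulmx_block _ 1 n 1 n 1 n).
have D1 : diag_mx (a%:M : 'rV_1) = a%:M by apply/matrixP => i j; rewrite !ord1 !mxE.
by rewrite !mulmx0 !mul0mx !mulmx1 !mul1mx !addr0 !add0r D1 [Q2 *m 0]mulmx0.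
Qed.
End RealSpectral.

Section Secular.
Variables (R : rcfType) (n : nat) (c : 'cV[R]_n) (d : 'rV[R]_n).

(* Terms with [d 0 i = x] are junk [c i 0 ^+ 2 / 0 = 0]; this is the right value in
   [MP_dot_secular], where such terms have [c i 0 = 0]. *)
Definition secular (x : R) : R := \sum_i c i 0 ^+ 2 / (d 0 i - x) ^+ 2.

Let J := [pred i | c i 0 != 0].

(* [secular x - g2] with the denominators of the genuine poles cleared: a polynomial
   with the same sign as [secular x - g2] left of those poles. *)
Definition secular_numerator (g2 : R) : {poly R} :=
  \sum_(i | J i) (c i 0 ^+ 2)%:P * \prod_(j | J j && (j != i)) ((d 0 j)%:P - 'X) ^+ 2
  - g2%:P * \prod_(j | J j) ((d 0 j)%:P - 'X) ^+ 2.

Lemma secular_numeratorE g2 x : (forall j, J j -> d 0 j != x) ->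
  (secular_numerator g2).[x] = (secular x - g2) * \prod_(j | J j) (d 0 j - x) ^+ 2.
Proof.
move=> dx; have -> : secular x = \sum_(i | J i) c i 0 ^+ 2 / (d 0 i - x) ^+ 2.
  rewrite /secular (bigID J) /= addrC big1 ?add0r // => i /negbNE/eqP->.
  by rewrite expr0n mul0r.
rewrite mulrBl mulr_suml !hornerE horner_sum horner_prod; congr (_ - _); last first.
  by congr (_ * _); apply: eq_bigr => j _; rewrite !hornerE.
apply: eq_bigr => i Ji; rewrite hornerM hornerC horner_prod (bigD1 i Ji) /= mulrA divfK.
  by congr (_ * _); apply: eq_bigr => j _; rewrite !hornerE.
by rewrite expf_neq0 // subr_eq0 dx.
Qed.

Lemma secular_ivt g2 lo hi : lo <= hi -> (forall i, c i 0 != 0 -> hi < d 0 i) ->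
  secular lo <= g2 <= secular hi -> exists2 x, lo <= x <= hi & secular x = g2.
Proof.
move=> lohi Jhi /andP[lo_g2 g2_hi].
have dx x : x <= hi -> forall j, J j -> d 0 j != x.
  by move=> xhi j Jj; rewrite gt_eqF // (le_lt_trans xhi (Jhi j Jj)).
have pos x : x <= hi -> 0 < \prod_(j | J j) (d 0 j - x) ^+ 2.
  move=> xhi; apply: prodr_gt0 => j Jj.
  by rewrite exprn_gt0 // subr_gt0 (le_lt_trans xhi (Jhi j Jj)).
have [|x /andP[lox xhi]] := @poly_ivt _ (secular_numerator g2) _ _ lohi.
  rewrite (secular_numeratorE _ (dx lo lohi)) (secular_numeratorE _ (dx hi (lexx hi))).
  apply/andP; split.
    by apply: mulr_le0_ge0; rewrite ?subr_le0 // ltW ?pos.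
  by apply: mulr_ge0; rewrite ?subr_ge0 // ltW ?pos.
move/rootP; rewrite (secular_numeratorE _ (dx x xhi)) => /eqP.
by rewrite mulf_eq0 (gt_eqF (pos x xhi)) orbF subr_eq0 => /eqP; exists x; rewrite ?lox.
Qed.

Lemma secular_far_left m g : 0 < g -> (forall i, m <= d 0 i) ->
  secular (m - (\sum_i c i 0 ^+ 2 + 1) / g) <= g ^+ 2.
Proof.
move=> g0 md; set S := \sum_i c i 0 ^+ 2; set K := (S + 1) / g.
have S0 : 0 <= S by apply: sumr_ge0 => i _; apply: sqr_ge0.
have K0 : 0 < K by rewrite divr_gt0 // ltr_wpDl.
apply: (@le_trans _ _ (S / K ^+ 2)).
  rewrite /secular /S mulr_suml; apply: ler_sum => i _.
  apply: ler_wpM2l; first exact: sqr_ge0.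
  have dK : K <= d 0 i - (m - K) by have := md i; lra.
  have dK0 := lt_le_trans K0 dK.
  by rewrite lef_pV2 ?posrE ?exprn_gt0 // ler_pXn2r ?nnegrE ?(ltW K0) ?(ltW dK0).
rewrite /K expr_div_n invf_div mulrA ler_pdivrMr ?exprn_gt0 ?ltr_wpDl //.
have g2 : 0 < g ^+ 2 by rewrite exprn_gt0.
nra.
Qed.

Lemma secular_near_pole i g : 0 < g -> c i 0 != 0 ->
  g ^+ 2 <= secular (d 0 i - `|c i 0| / g).
Proof.
move=> g0 ci; rewrite /secular (bigD1 i) //= subKr expr_div_n.
rewrite real_normK ?num_real // invf_div mulrC divfK ?sqrf_eq0 // lerDl.
by apply: sumr_ge0 => j _; rewrite divr_ge0 ?sqr_ge0.
Qed.

Section LeftOfMin.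
Variables (m g : R).
Hypotheses (g0 : 0 < g) (md : forall i, m <= d 0 i).

Let lo := m - (\sum_i c i 0 ^+ 2 + 1) / g.

Lemma secular_root_of_pole i : d 0 i = m -> c i 0 != 0 ->
  exists2 x, x < m & secular x = g ^+ 2.
Proof.
move=> dim ci; pose hi := m - `|c i 0| / g.
have hi_lt_m : hi < m by rewrite /hi ltrBlDr ltrDl divr_gt0 ?normr_gt0.
have lohi : lo <= hi.
  rewrite /lo /hi lerD2l lerN2 ler_pM2r ?invr_gt0 //.
  have : c i 0 ^+ 2 <= \sum_j c j 0 ^+ 2.
    by rewrite (bigD1 i) //= lerDl; apply: sumr_ge0 => j _; apply: sqr_ge0.
  rewrite -real_normK ?num_real //; have := normr_ge0 (c i 0); nra.
have poles j : c j 0 != 0 -> hi < d 0 j by move=> _; apply: lt_le_trans (md j).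
have bounds : secular lo <= g ^+ 2 <= secular hi.
  by rewrite secular_far_left // /hi -dim secular_near_pole.
have [x /andP[_ xhi] sx] := secular_ivt lohi poles bounds.
by exists x => //; apply: le_lt_trans hi_lt_m.
Qed.

Lemma secular_root_of_gap : (forall i, c i 0 != 0 -> m < d 0 i) ->
  g ^+ 2 < secular m -> exists2 x, x < m & secular x = g ^+ 2.
Proof.
move=> poles gm; have lom : lo <= m.
  have S0 : 0 <= \sum_j c j 0 ^+ 2 by apply: sumr_ge0 => j _; apply: sqr_ge0.
  by rewrite /lo lerBlDr lerDl divr_ge0 ?addr_ge0 ?(ltW g0).
have bounds : secular lo <= g ^+ 2 <= secular m by rewrite secular_far_left // ltW.
have [x /andP[_ xm] sx] := secular_ivt lom poles bounds.
by exists x => //; rewrite lt_neqAle xm andbT; apply: contraTneq gm => <-; rewrite sx ltxx.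
Qed.
End LeftOfMin.
End Secular.

Lemma vnorm_eq (R : realType) n (y : 'cV[R]_n) r :
  0 <= r -> vnorm y = r <-> dot y y = r ^+ 2.
Proof.
rewrite /vnorm => r0; split => [<-|->]; last by rewrite sqrtr_sqr ger0_norm.
by rewrite sqr_sqrtr // dot_self_ge0.
Qed.

Section LGandQEP.
Variables (R : realType) (n : nat) (H : 'M[R]_n) (g0 : 'cV[R]_n) (gam : R).
Hypotheses (HT : H^T = H) (gam0 : 0 < gam).

Let tr_shift lam : (H - lam%:M)^T = H - lam%:M := trmx_subscalar lam HT.

Lemma LG_feasible_QEP lam y :
  LG_feasible H g0 gam lam y -> exists w, QEP_feasible H g0 gam lam w.
Proof.
move=> [Ay /(vnorm_eq _ (ltW gam0)) yy]; set A := H - lam%:M in Ay *.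
have gT : g0^T = - (y^T *m A) by rewrite -[g0]opprK -Ay linearN /= trmx_mul tr_shift.
have [/(sym_eigenvalueP HT) [z z0 Hz] | Hlam] := boolP (eigenvalue H lam).
  have Az : A *m z = 0 by apply/eqP; rewrite mulmx_subscalar_eq0 Hz.
  exists z; split => //.
  by rewrite -mulmxA Az mulmx0 -mulmxA gT mulNmx -mulmxA Az mulmx0 oppr0 mulmx0 scaler0.
have Aunit : A \in unitmx.
  by rewrite -row_free_unit -kermx_eq0; move: Hlam; rewrite /eigenvalue negbK.
have y0 : y != 0.
  by apply: contra_eq_neq yy => ->; rewrite trmx0 mul0mx mxE eq_sym expf_neq0 ?gt_eqF.
exists (invmx A *m y); split.
  by apply: contra_neq y0 => w0; rewrite -(mulKVmx Aunit y) w0 mulmx0.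
have gw : g0^T *m (invmx A *m y) = - (gam ^+ 2)%:M.
  by rewrite gT mulNmx -mulmxA (mulKVmx Aunit) dot_scalar yy.
rewrite -mulmxA (mulKVmx Aunit) Ay -(mulmxA g0) gw mulmxN mul_mx_scalar scalerN scalerA.
by rewrite mulVf ?scale1r // expf_neq0 ?gt_eqF.
Qed.

Lemma QEP_feasible_LG lam w : QEP_feasible H g0 gam lam w -> dot g0 w != 0 ->
  exists y, LG_feasible H g0 gam lam y.
Proof.
move=> [w0 QEw] s0; set s := dot g0 w in s0; set A := H - lam%:M in QEw.
have gw : g0^T *m w = s%:M by rewrite dot_scalar.
have wg : w^T *m g0 = s%:M by rewrite -trmx_dot gw tr_scalar_mx.
rewrite -(mulmxA g0) gw mul_mx_scalar scalerA in QEw.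
exists ((- gam ^+ 2 / s) *: (A *m w)); split.
  rewrite -scalemxAr mulmxA QEw scalerA.
  have -> : - gam ^+ 2 / s * (gam ^- 2 * s) = -1 by field; rewrite s0 gt_eqF.
  by rewrite scaleN1r.
apply/(vnorm_eq _ (ltW gam0)); rewrite dotZl dotZr trmx_mul tr_shift -mulmxA (mulmxA A) QEw.
rewrite -scalemxAr [(_ *: _ : 'M_1) 0 0]mxE wg mxE eqxx mulr1n.
by field; rewrite s0 gt_eqF.
Qed.

Lemma QEP_feasible_orth_eigen lam w : QEP_feasible H g0 gam lam w -> dot g0 w = 0 ->
  H *m w = lam *: w.
Proof.
move=> [_ QEw] s0; apply/eqP; rewrite -mulmx_subscalar_eq0 -dot_self_eq0.
have /eqP gw : g0^T *m w == 0 by rewrite trmx_mulmx_eq0 s0.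
rewrite trmx_mul tr_shift -mulmxA (mulmxA (H - _)) QEw -(mulmxA g0) gw.
by rewrite !(mulmx0, scaler0) mxE.
Qed.

Lemma eigen_orth_QEP_feasible lam w : w != 0 -> H *m w = lam *: w -> dot g0 w = 0 ->
  QEP_feasible H g0 gam lam w.
Proof.
move=> w0 Hw s0; have /eqP Aw : (H - lam%:M) *m w == 0 by rewrite mulmx_subscalar_eq0 Hw.
have /eqP gw : g0^T *m w == 0 by rewrite trmx_mulmx_eq0 s0.
by split; rewrite // -mulmxA Aw mulmx0 -(mulmxA g0) gw mulmx0 scaler0.
Qed.
End LGandQEP.

Section MoorePenrose.
Variables (R : realType) (n : nat) (A X : 'M[R]_n).
Hypothesis AX : is_MP_inverse A X.

Lemma MP_inverse_orth (g z : 'cV[R]_n) : A *m z = 0 -> (X *m g)^T *m z = 0.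
Proof.
case: AX => _ XAX _ XAT Az.
have XT : X^T = X^T *m (X *m A) by rewrite -{1}XAX trmx_mul XAT.
by rewrite trmx_mul XT -!mulmxA Az !mulmx0.
Qed.

Lemma MP_inverse_solves (g : 'cV[R]_n) :
  A^T = A -> (forall z : 'cV_n, A *m z = 0 -> dot g z = 0) ->
  A *m (X *m g) = g.
Proof.
case: AX => AXA _ AXT _ AT gA.
pose E := 1%:M - A *m X.
have ET : E^T = E by rewrite /E linearB /= trmx1 AXT.
have EA : E *m A = 0 by rewrite /E mulmxBl mul1mx AXA subrr.
have AE : A *m E = 0 by rewrite -[A *m E]trmxK trmx_mul ET AT EA trmx0.
have EE : E *m E = E.
  rewrite {1}/E mulmxBl mul1mx -[A *m X *m E]trmxK trmx_mul ET AXT mulmxA EA.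
  by rewrite mul0mx trmx0 subr0.
suff /eqP : E *m g = 0 by rewrite /E mulmxBl mul1mx subr_eq0 mulmxA => /eqP <-.
apply/eqP; rewrite -dot_self_eq0 trmx_mul ET -mulmxA (mulmxA E) EE.
by apply/eqP/gA; rewrite mulmxA AE mul0mx.
Qed.
End MoorePenrose.

Lemma MP_inverse_is_MP (R : realType) n (A : 'M[R]_n) :
  (exists X, is_MP_inverse A X) -> is_MP_inverse A (MP_inverse A).
Proof. exact: (@xgetPex _ 0 [set X | is_MP_inverse A X]). Qed.

Section Spectral.
Variables (R : realType) (n : nat) (H : 'M[R]_n) (g0 : 'cV[R]_n) (gam : R).
Variables (Q : 'M[R]_n) (d : 'rV[R]_n).
Hypotheses (gam0 : 0 < gam) (QtQ : Q^T *m Q = 1%:M) (HQ : H = Q *m diag_mx d *m Q^T).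

Let QQt : Q *m Q^T = 1%:M := mulmx1C QtQ.

Let HT : H^T = H.
Proof. by rewrite HQ !trmx_mul trmxK tr_diag_mx mulmxA. Qed.

Local Notation c := (Q^T *m g0).

Lemma coordK (u : 'cV[R]_n) : Q^T *m (Q *m u) = u.
Proof. by rewrite mulmxA QtQ mul1mx. Qed.

Lemma coordKV (v : 'cV[R]_n) : Q *m (Q^T *m v) = v.
Proof. by rewrite mulmxA QQt mul1mx. Qed.

Lemma dot_coord (u v : 'cV[R]_n) : dot u v = dot (Q^T *m u) (Q^T *m v).
Proof. by rewrite trmx_mul trmxK mulmxA -(mulmxA u^T) QQt mulmx1. Qed.

Lemma coord_col (v : 'cV[R]_n) i : (Q^T *m v) i 0 = dot v (col i Q).
Proof. by rewrite !mxE; apply: eq_bigr => k _; rewrite !mxE mulrC. Qed.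

Lemma coord_shift lam (z : 'cV[R]_n) :
  Q^T *m ((H - lam%:M) *m z) = \col_i ((d 0 i - lam) * (Q^T *m z) i 0).
Proof.
rewrite mulmxBl mulmxBr HQ !mulmxA QtQ mul1mx mul_mx_scalar -scalemxAl -mulmxA.
by rewrite mul_diag_mx; apply/colP => i; rewrite !mxE mulrBl.
Qed.

Lemma coord_eigen b (z : 'cV[R]_n) i :
  H *m z = b *: z -> (Q^T *m z) i 0 != 0 -> d 0 i = b.
Proof.
move=> /eqP; rewrite -mulmx_subscalar_eq0 => /eqP/(congr1 (mulmx Q^T)).
rewrite coord_shift mulmx0 => /colP/(_ i); rewrite !mxE => /eqP.
by rewrite mulf_eq0 subr_eq0 => /orP[/eqP | /eqP ->]; rewrite ?eqxx.
Qed.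

Lemma col_eigen i : H *m col i Q = d 0 i *: col i Q.
Proof.
apply/eqP; rewrite -mulmx_subscalar_eq0 -[X in X == 0]coordKV coord_shift colE coordK.
apply/eqP; rewrite -[RHS](mulmx0 _ Q); congr (Q *m _); apply/colP => j.
by rewrite !mxE; case: eqP => [->|]; rewrite ?subrr ?mul0r ?mulr0.
Qed.

Lemma col_neq0 i : col i Q != 0.
Proof.
apply: contra_neq (@oner_neq0 R) => Qi0.
by have /colP/(_ i) := coordK (delta_mx i 0); rewrite -colE Qi0 mulmx0 !mxE !eqxx.
Qed.

Lemma eigenvalue_diag_entry b : eigenvalue H b -> exists i, d 0 i = b.
Proof.
move=> /(sym_eigenvalueP HT) [z z0 Hz].
have [i zi | zQ0] := pickP (fun i => (Q^T *m z) i 0 != 0).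
  by exists i; apply: coord_eigen Hz zi.
suff zQ : Q^T *m z = 0 by move: z0; rewrite -(coordKV z) zQ mulmx0 eqxx.
by apply/colP => i; move/negbFE/eqP: (zQ0 i) => ->; rewrite mxE.
Qed.

Lemma MP_inverse_exists lam : exists X, is_MP_inverse (H - lam%:M) X.
Proof.
pose e := \row_j (d 0 j - lam); pose f := \row_j (d 0 j - lam)^-1.
have AE : H - lam%:M = Q *m diag_mx e *m Q^T.
  have -> : diag_mx e = diag_mx d - lam%:M by apply/matrixP => i j; rewrite !mxE mulrnBl.
  by rewrite mulmxBr mulmxBl -HQ mul_mx_scalar -scalemxAl QQt scalemx1.
have conj_mul a b : Q *m diag_mx a *m Q^T *m (Q *m diag_mx b *m Q^T) =
    Q *m diag_mx (\row_j (a 0 j * b 0 j)) *m Q^T.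
  by rewrite -!mulmxA (mulmxA Q^T) QtQ mul1mx mulmxA -mulmx_diag !mulmxA.
have conj_tr a : (Q *m diag_mx a *m Q^T)^T = Q *m diag_mx a *m Q^T.
  by rewrite !trmx_mul trmxK tr_diag_mx mulmxA.
exists (Q *m diag_mx f *m Q^T); rewrite AE; split; rewrite ?conj_mul ?conj_tr //.
  congr (Q *m diag_mx _ *m Q^T); apply/rowP => j; rewrite !mxE.
  by have [->|e0] := eqVneq (d 0 j - lam) 0; rewrite ?mulr0 // mulfV ?mul1r.
congr (Q *m diag_mx _ *m Q^T); apply/rowP => j; rewrite !mxE.
by have [->|e0] := eqVneq (d 0 j - lam) 0; rewrite ?invr0 ?mulr0 // mulVf ?mul1r.
Qed.

Lemma MP_dot_secular lam X : is_MP_inverse (H - lam%:M) X ->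
  (forall z : 'cV_n, (H - lam%:M) *m z = 0 -> dot g0 z = 0) ->
  dot (X *m g0) (X *m g0) = secular c d lam.
Proof.
move=> AX g_orth; have := MP_inverse_solves AX (trmx_subscalar _ HT) g_orth.
move/(congr1 (mulmx Q^T)); rewrite coord_shift => /colP coordE.
rewrite dot_coord dot_self_sum; apply: eq_bigr => i _.
have [dl | dl] := eqVneq (d 0 i - lam) 0; last first.
  by rewrite -coordE mxE exprMn mulrC mulKf ?expf_neq0.
have Ai : (H - lam%:M) *m col i Q = 0.
  by apply/eqP; rewrite mulmx_subscalar_eq0 col_eigen (subr0_eq dl).
by rewrite dl expr0n invr0 mulr0 coord_col (MP_inverse_orth AX _ Ai) mxE expr0n.
Qed.

Variable i0 : 'I_n.
Hypothesis i0_min : forall i, d 0 i0 <= d 0 i.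
Local Notation m := (d 0 i0).

Lemma eigenvalue_ge_min b : eigenvalue H b -> m <= b.
Proof. by case/eigenvalue_diag_entry => i <-. Qed.

Lemma lambda_minE : lambda_min H = m.
Proof.
have m_eig : eigenvalue H m.
  by apply/(sym_eigenvalueP HT); exists (col i0 Q); [apply: col_neq0 | apply: col_eigen].
apply: xget_unique; first by split => // b /eigenvalue_ge_min.
by move=> b [b_eig b_min]; apply/le_anti; rewrite b_min // eigenvalue_ge_min.
Qed.

Lemma LG_feasible_of_secular lam : lam < m -> secular c d lam = gam ^+ 2 ->
  exists y, LG_feasible H g0 gam lam y.
Proof.
move=> lam_m sec; have dlam i : d 0 i - lam != 0.
  by rewrite subr_eq0 gt_eqF // (lt_le_trans lam_m (i0_min i)).
pose u : 'cV_n := \col_i (- c i 0 / (d 0 i - lam)).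
exists (Q *m u); split.
  rewrite -[LHS]coordKV -[RHS]coordKV coord_shift coordK mulmxN; congr (Q *m _).
  by apply/colP => i; rewrite !mxE mulrC divfK.
apply/(vnorm_eq _ (ltW gam0)); rewrite dot_coord coordK dot_self_sum -sec.
by apply: eq_bigr => i _; rewrite mxE expr_div_n sqrrN.
Qed.

Lemma LG_below_of_nonorth (z : 'cV_n) : H *m z = m *: z -> dot g0 z != 0 ->
  exists2 lam, lam < m & exists y, LG_feasible H g0 gam lam y.
Proof.
move=> Hz gz; have [i /andP[ci zi]] : exists i, (c i 0 != 0) && ((Q^T *m z) i 0 != 0).
  apply/existsP; apply: contraR gz; rewrite negb_exists => /forallP cz.
  rewrite dot_coord mxE; apply/eqP/big1 => i _; rewrite mxE.
  by have := cz i; rewrite negb_and !negbK => /orP[] /eqP->; rewrite ?mul0r ?mulr0.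
have [lam lam_m sec] := secular_root_of_pole gam0 i0_min (coord_eigen Hz zi) ci.
by exists lam => //; apply: LG_feasible_of_secular.
Qed.

Lemma LG_below_of_secular : (forall z : 'cV_n, H *m z = m *: z -> dot g0 z = 0) ->
  gam ^+ 2 < secular c d m -> exists2 lam, lam < m & exists y, LG_feasible H g0 gam lam y.
Proof.
move=> g_orth gap; have poles i : c i 0 != 0 -> m < d 0 i.
  move=> ci; rewrite lt_neqAle i0_min andbT; apply: contra_neq ci => mi.
  by rewrite coord_col g_orth // col_eigen mi.
have [lam lam_m sec] := secular_root_of_gap gam0 i0_min poles gap.
by exists lam => //; apply: LG_feasible_of_secular.
Qed.

Lemma LG_feasible_unique_below_min lam y y' : lam < m ->
  LG_feasible H g0 gam lam y -> LG_feasible H g0 gam lam y' -> y = y'.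
Proof.
move=> lam_m [Ay _] [Ay' _]; apply/eqP; rewrite -subr_eq0; apply: contraLR lam_m => yy'.
rewrite -leNgt; apply/eigenvalue_ge_min/(sym_eigenvalueP HT); exists (y - y') => //.
by apply/eqP; rewrite -mulmx_subscalar_eq0 mulmxBr Ay Ay' subrr.
Qed.

Section Minimizer.
Variables (lam_s : R) (w_s : 'cV[R]_n).
Hypotheses (QEP_s : QEP_feasible H g0 gam lam_s w_s)
  (QEP_lb : forall lam w, QEP_feasible H g0 gam lam w -> lam_s <= lam).

Lemma LG_feasible_ge lam y : LG_feasible H g0 gam lam y -> lam_s <= lam.
Proof. by case/(LG_feasible_QEP HT gam0) => w; apply: QEP_lb. Qed.

Lemma LG_minimizer_at lam y : lam <= lam_s -> LG_feasible H g0 gam lam y ->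
  LG_minimizer H g0 gam (lam, y).
Proof. by move=> lam_le Ly; split => // lam' y' /LG_feasible_ge; apply: le_trans. Qed.

Lemma easy_case_LG_unique : (forall lam w, QEP_minimizer H g0 gam lam w -> dot g0 w != 0) ->
  lam_s < m /\ exists! p, LG_minimizer H g0 gam p.
Proof.
move=> nonorth; have lam_s_m : lam_s < m.
  rewrite ltNge; apply/negP => m_le.
  have [g_orth | g_nonorth] := eqVneq (dot g0 (col i0 Q)) 0.
    have QEP_m := eigen_orth_QEP_feasible gam (col_neq0 i0) (col_eigen i0) g_orth.
    have lam_s_eq : lam_s = m by apply/le_anti; rewrite m_le (QEP_lb QEP_m).
    have /nonorth : QEP_minimizer H g0 gam m (col i0 Q).
      by split => // lam w; rewrite -lam_s_eq; apply: QEP_lb.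
    by rewrite g_orth eqxx.
  have [lam lam_m [y /LG_feasible_ge]] := LG_below_of_nonorth (col_eigen i0) g_nonorth.
  by rewrite leNgt (lt_le_trans lam_m m_le).
split => //; have [y Ly] := QEP_feasible_LG HT gam0 QEP_s (nonorth _ _ (conj QEP_s QEP_lb)).
exists (lam_s, y); split; first exact: LG_minimizer_at.
move=> [lam y'] [Ly' /= lam_min]; have lam_s_eq : lam_s = lam.
  by apply/le_anti; rewrite (lam_min _ _ Ly) (LG_feasible_ge Ly').
by rewrite -lam_s_eq in Ly' *; rewrite (LG_feasible_unique_below_min lam_s_m Ly Ly').
Qed.

Lemma hard_case_lambda_min : (exists lam w, QEP_minimizer H g0 gam lam w /\ dot g0 w = 0) ->
  lam_s = m /\ forall z : 'cV_n, H *m z = m *: z -> dot g0 z = 0.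
Proof.
move=> [lam [w [[Qw Qw_lb] gw]]].
have lam_eq : lam = lam_s by apply/le_anti; rewrite (Qw_lb _ _ QEP_s) (QEP_lb Qw).
have m_le : m <= lam_s.
  rewrite -lam_eq; apply/eigenvalue_ge_min/(sym_eigenvalueP HT).
  by exists w; [case: Qw | apply: QEP_feasible_orth_eigen Qw gw].
have g_orth (z : 'cV_n) : H *m z = m *: z -> dot g0 z = 0.
  move=> Hz; apply/eqP; apply: contraT => gz.
  have [lam' lam'_m [y /LG_feasible_ge]] := LG_below_of_nonorth Hz gz.
  by rewrite leNgt (lt_le_trans lam'_m m_le).
split => //; apply/le_anti; rewrite m_le andbT; apply: QEP_lb (col i0 Q) _.
exact/(eigen_orth_QEP_feasible _ (col_neq0 i0) (col_eigen i0))/g_orth/col_eigen.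
Qed.

Section HardCase.
Hypotheses (lam_s_m : lam_s = m) (g_orth : forall z : 'cV_n, H *m z = m *: z -> dot g0 z = 0).

Let A := H - m%:M.
Let xs := - (MP_inverse A *m g0).

Let ker_orth (z : 'cV_n) : A *m z = 0 -> dot g0 z = 0.
Proof. by move/eqP; rewrite mulmx_subscalar_eq0 => /eqP/g_orth. Qed.

Let A_MP : is_MP_inverse A (MP_inverse A) := MP_inverse_is_MP (MP_inverse_exists m).

Lemma hard_case_solution : A *m xs = - g0.
Proof. by rewrite mulmxN MP_inverse_solves // trmx_subscalar. Qed.

Lemma hard_case_orth (z : 'cV_n) : A *m z = 0 -> xs^T *m z = 0.
Proof. by move=> Az; rewrite [(- _)^T]linearN mulNmx (MP_inverse_orth A_MP _ Az) oppr0. Qed.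

Lemma hard_case_dot : dot xs xs = secular c d m.
Proof. by rewrite [(- _)^T]linearN mulNmx mulmxN opprK (MP_dot_secular A_MP ker_orth). Qed.

Lemma hard_case_LG_feasible s : s ^+ 2 = gam ^+ 2 - secular c d m ->
  LG_feasible H g0 gam m (xs + s *: col i0 Q).
Proof.
have Acol : A *m col i0 Q = 0 by apply/eqP; rewrite mulmx_subscalar_eq0 col_eigen.
move=> s2; split; first by rewrite mulmxDr hard_case_solution -scalemxAr Acol scaler0 addr0.
apply/(vnorm_eq _ (ltW gam0)); rewrite dot_self_add_orth; last first.
  by rewrite -scalemxAr hard_case_orth ?scaler0.
rewrite hard_case_dot dotZl dotZr -coord_col colE coordK mxE !eqxx mulr1 -expr2 s2.
by rewrite addrC subrK.
Qed.

Lemma hard_case_LG_unique_of_norm : vnorm xs = gam -> exists! p, LG_minimizer H g0 gam p.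
Proof.
move=> xs_norm; have Lxs : LG_feasible H g0 gam m xs by split; rewrite ?hard_case_solution.
exists (m, xs); split; first by apply: LG_minimizer_at; rewrite ?lam_s_m.
move=> [lam y] [Ly /= lam_min]; have lam_eq : m = lam.
  by apply/le_anti; rewrite (lam_min _ _ Lxs) -lam_s_m (LG_feasible_ge Ly).
rewrite -lam_eq in Ly *; case: Ly => Ay /(vnorm_eq _ (ltW gam0)) yy.
move/(vnorm_eq _ (ltW gam0)): xs_norm => xs2.
have Az : A *m (y - xs) = 0 by rewrite mulmxBr Ay hard_case_solution subrr.
have := dot_self_add_orth (hard_case_orth Az).
rewrite subrKC yy xs2 -[X in X = _]addr0 => /addrI/esym/eqP.
by rewrite dot_self_eq0 subr_eq0 => /eqP ->.
Qed.

Lemma hard_case_norm_of_LG_unique : (exists! p, LG_minimizer H g0 gam p) -> vnorm xs = gam.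
Proof.
move=> [p [_ LG_uniq]]; apply/(vnorm_eq _ (ltW gam0)); rewrite hard_case_dot.
have [lt | gt | //] := ltgtP (secular c d m) (gam ^+ 2).
  pose t := Num.sqrt (gam ^+ 2 - secular c d m).
  have t2 : t ^+ 2 = gam ^+ 2 - secular c d m by rewrite sqr_sqrtr // subr_ge0 ltW.
  have t0 : t != 0 by rewrite sqrtr_eq0 -ltNge subr_gt0.
  have LG_min s : s ^+ 2 = t ^+ 2 -> LG_minimizer H g0 gam (m, xs + s *: col i0 Q).
    move=> s2; apply: LG_minimizer_at; first by rewrite lam_s_m.
    by apply: hard_case_LG_feasible; rewrite s2.
  have := LG_uniq _ (LG_min t erefl); rewrite (LG_uniq _ (LG_min (- t) (sqrrN t))).
  case=> /addrI/eqP; rewrite -subr_eq0 -scalerBl scaler_eq0 (negPf (col_neq0 i0)) orbF.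
  by rewrite -opprD oppr_eq0 -mulr2n mulrn_eq0 (negPf t0).
have [lam lam_m [y /LG_feasible_ge]] := LG_below_of_secular g_orth gt.
by rewrite lam_s_m leNgt lam_m.
Qed.
End HardCase.
End Minimizer.
End Spectral.

Theorem theorem2p6 (R : realType) (l : nat) (H : 'M[R]_l) (g0 : 'cV[R]_l) (gam : R)
  (lam_s : R) (w_s : 'cV[R]_l) :
  H^T = H -> g0 != 0 -> 0 < gam ->
  QEP_minimizer H g0 gam lam_s w_s ->
  ((forall lam w, QEP_minimizer H g0 gam lam w -> (g0^T *m w) 0 0 != 0) ->
     lam_s < lambda_min H /\ exists! p, LG_minimizer H g0 gam p) /\
  ((exists lam w, QEP_minimizer H g0 gam lam w /\ (g0^T *m w) 0 0 = 0) ->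
     lam_s = lambda_min H /\
     ((exists! p, LG_minimizer H g0 gam p) <->
      vnorm (- (MP_inverse (H - lam_s%:M) *m g0)) = gam)).
Proof.
move=> HT g0_neq0 gam0 [QEP_s QEP_lb].
have [Q [d [QtQ HQ]]] := sym_orthogonal_diag HT.
case: l => [|l] in H g0 w_s HT g0_neq0 QEP_s QEP_lb Q d QtQ HQ *.
  by rewrite [g0]flatmx0 eqxx in g0_neq0.
have [i0 _ i0_min] := @arg_minP _ R _ ord0 predT (fun i => d 0 i) isT.
have {}i0_min i : d 0 i0 <= d 0 i by apply: i0_min.
rewrite (lambda_minE QtQ HQ i0_min); split.
  exact: (easy_case_LG_unique gam0 QtQ HQ i0_min QEP_s QEP_lb).
case/(hard_case_lambda_min gam0 QtQ HQ i0_min QEP_s QEP_lb) => lam_s_m g_orth.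
split => //; rewrite lam_s_m; split.
  exact: (hard_case_norm_of_LG_unique gam0 QtQ HQ i0_min QEP_lb lam_s_m g_orth).
exact: (hard_case_LG_unique_of_norm gam0 QtQ HQ i0_min QEP_lb lam_s_m g_orth).
Qed.
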